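(* Let $N\ge 0$ be an integer, let $\mathcal{H}_N$ be a complex inner-product space of dimension $N+1$ with orthonormal basis $|\Psi_0\rangle,\dots,|\Psi_N\rangle$, and let $\beta_0,\dots,\beta_{N-1}>0$ be real numbers, with $\beta_N=0$. Let $\hat A$ be the linear operator on $\mathcal{H}_N$ defined by $\hat A|\Psi_0\rangle=0$ and $\hat A|\Psi_{n+1}\rangle=\sqrt{\beta_n}\,|\Psi_n\rangle$ for $0\le n\le N-1$, with adjoint $\hat A^\dagger$ (so $\hat A^\dagger|\Psi_n\rangle=\sqrt{\beta_n}|\Psi_{n+1}\rangle$, $\hat A^\dagger|\Psi_N\rangle=0$). For $0\le n\le N$ define $g^{(0)}_n=1$ and, for $l\ge 1$, $$g^{(l)}_n=\sum_{s_1=0}^{n}\beta_{s_1}\sum_{s_2=0}^{s_1+1}\beta_{s_2}\cdots\sum_{s_l=0}^{s_{l-1}+1}\beta_{s_l},$$ equivalently by the recursion $g^{(l)}_n=\sum_{s=0}^{n}\beta_s\,g^{(l-1)}_{s+1}$ (with $g^{(l-1)}_{N+1}$ multiplying $\beta_N=0$). Then for every real $\tau$, $$e^{-i\tau(\hat A+\hat A^\dagger)}|\Psi_0\rangle=\sum_{n=0}^{N}\gamma_n(\tau)\,(-i\hat A^\dagger)^n|\Psi_0\rangle,\qquad \gamma_n(\tau)=\sum_{l=0}^{\infty}\frac{(-1)^l\,\tau^{n+2l}}{(n+2l)!}\,g^{(l)}_n .$$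
   Context: This describes the time evolution (interaction picture, dimensionless time $\tau$) of the state $|\Psi_0\rangle$ annihilated by the ladder operator $\hat A$, within a finite-dimensional invariant subspace on which the interaction Hamiltonian equals $\hat A+\hat A^\dagger$. Convention: $\beta_s=0$ for $s\ge N$. *)

From HB Require Import structures.
From mathcomp Require Import all_boot all_order all_algebra.
From mathcomp Require Import complex.
From mathcomp Require Import all_classical all_reals all_analysis.
Set Implicit Arguments. Unset Strict Implicit. Unset Printing Implicit Defensive.
Import Order.TTheory GRing.Theory Num.Theory.
Import numFieldNormedType.Exports.
Local Open Scope ring_scope.
Local Open Scope complex_scope.

Section Defs.
Variable R : realType.
Local Notation C := (R[i]).

Definition betaN (N : nat) (beta : nat -> R) (s : nat) : R :=
  if (s < N)%N then beta s else 0.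

Fixpoint gcoef (N : nat) (beta : nat -> R) (l n : nat) : R :=
  match l with
  | 0 => 1
  | l'.+1 => \sum_(0 <= s < n.+1) betaN N beta s * gcoef N beta l' s.+1
  end.

Definition gamma_term (N : nat) (beta : nat -> R) (n : nat) (tau : R) (l : nat) : R :=
  (-1) ^+ l * tau ^+ (n + 2 * l) / (n + 2 * l)`!%:R * gcoef N beta l n.

Definition gamma (N : nat) (beta : nat -> R) (n : nat) (tau : R) : R :=
  limn (series (gamma_term N beta n tau)).

(* coordinates w.r.t. the orthonormal basis Psi_0..Psi_N of H_N = C^(N+1) *)
Definition Psi (N : nat) (k : 'I_N.+1) : 'cV[C]_N.+1 := delta_mx k 0.

(* ladder operator: A Psi_{n+1} = sqrt(beta_n) Psi_n, A Psi_0 = 0 *)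
Definition ladderA (N : nat) (beta : nat -> R) : 'M[C]_N.+1 :=
  \matrix_(i, j) (if (j == i.+1 :> nat) then (Num.sqrt (betaN N beta i))%:C else 0).

Definition adj (N : nat) (M : 'M[C]_N.+1) : 'M[C]_N.+1 :=
  \matrix_(i, j) (M j i)^*.

Definition expv_partial (N : nat) (H : 'M[C]_N.+1) (tau : R) (v : 'cV[C]_N.+1)
  (m : nat) : 'cV[C]_N.+1 :=
  \sum_(k < m) ((- 'i * tau%:C) ^+ k / k`!%:R) *: (H ^+ k *m v).

End Defs.

(* In the vectors [raised n = (A^dagger)^n Psi_0], which are multiples of [Psi_n] and vanish
   for [n = N + 1], the Hamiltonian is a weighted shift:
   [H (raised n) = raised (n + 1) + beta_(n-1) raised (n - 1)].  Hence
   [H^k Psi_0 = sum_n h_k(n) raised n] with [h_(k+1)(n) = h_k(n-1) + beta_n h_k(n+1)], and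
   this recursion is solved by [h_(n+2l)(n) = g^(l)_n], all other [h_k(n)] being zero.
   Regrouping the exponential series by [n] yields [(-i)^n] times partial sums of the series
   of [gamma_n]; since [g^(l)_n <= (sum_s beta_s)^l], its terms are dominated by
   [|tau|^n (tau^2 sum_s beta_s)^l / l!], so it converges absolutely. *)
From HB Require Import structures.
From mathcomp Require Import all_boot all_order all_algebra.
From mathcomp Require Import complex.
From mathcomp Require Import all_classical all_reals all_analysis.
From mathcomp Require Import zify.
Set Implicit Arguments.
Unset Strict Implicit.
Unset Printing Implicit Defensive.
Import Order.TTheory GRing.Theory Num.Theory.
Import numFieldNormedType.Exports.
Local Open Scope ring_scope.
Local Open Scope classical_set_scope.
Local Open Scope complex_scope.

Section Coefficients.
Variable R : realType.
Variables (N : nat) (beta : nat -> R).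
Hypothesis beta_gt0 : forall s : nat, (s < N)%N -> 0 < beta s.

Local Notation b := (betaN N beta).
Local Notation g := (gcoef N beta).

Lemma betaN_ge0 s : 0 <= b s.
Proof. by rewrite /betaN; case: ifP => // /beta_gt0 /ltW. Qed.

Lemma betaN_out s : (N <= s)%N -> b s = 0.
Proof. by rewrite /betaN ltnNge => ->. Qed.

Lemma gcoef_ge0 l n : 0 <= g l n.
Proof.
elim: l n => [|l IH] n /=; first exact: ler01.
by apply: sumr_ge0 => s _; rewrite mulr_ge0 ?betaN_ge0.
Qed.

Definition beta_sum : R := \sum_(0 <= s < N) b s.

Lemma beta_sum_ge0 : 0 <= beta_sum.
Proof. by apply: sumr_ge0 => s _; exact: betaN_ge0. Qed.

Lemma sum_betaN_le m : \sum_(0 <= s < m) b s <= beta_sum.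
Proof.
rewrite /beta_sum; have [mN|Nm] := leqP m N.
  rewrite [leRHS](@big_cat_nat _ _ _ m) //= lerDl.
  by apply: sumr_ge0 => s _; exact: betaN_ge0.
rewrite [leLHS](@big_cat_nat _ _ _ N) ?(ltnW Nm) //= [X in _ + X]big_nat_cond.
by rewrite [X in _ + X]big1 ?addr0 // => s /andP[/andP[Ns _] _]; rewrite betaN_out.
Qed.

Lemma gcoef_le l n : g l n <= beta_sum ^+ l.
Proof.
elim: l n => [|l IH] n /=; first by rewrite expr0.
apply: (@le_trans _ _ (\sum_(0 <= s < n.+1) b s * beta_sum ^+ l)).
  by apply: ler_sum => s _; rewrite ler_wpM2l ?betaN_ge0.
by rewrite -big_distrl exprS ler_wpM2r ?exprn_ge0 ?beta_sum_ge0 ?sum_betaN_le.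
Qed.

Variable tau : R.

Lemma norm_gamma_term_le n l :
  `|gamma_term N beta n tau l| <=
    `|tau| ^+ n * ((tau ^+ 2 * beta_sum) ^+ l / l`!%:R).
Proof.
rewrite /gamma_term !normrM normfV !normrX normrN1 expr1n mul1r normr_nat.
rewrite (ger0_norm (gcoef_ge0 _ _)) exprD exprM real_normK ?num_real //.
rewrite [(_ * beta_sum) ^+ l]exprMn -!mulrA.
apply: ler_wpM2l; first exact: exprn_ge0.
apply: ler_wpM2l; first by rewrite exprn_ge0 ?sqr_ge0.
rewrite mulrC ler_pM ?invr_ge0 ?gcoef_ge0 ?gcoef_le //.
by rewrite lef_pV2 ?posrE ?ltr0n ?fact_gt0 // ler_nat leq_fact //; lia.
Qed.

Lemma gamma_term_cvg n : cvgn (series (gamma_term N beta n tau)).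
Proof.
apply: normed_cvg.
apply: (@series_le_cvg _ _ (`|tau| ^+ n *: exp_coeff (tau ^+ 2 * beta_sum))).
- by move=> l; exact: normr_ge0.
- move=> l; rewrite /= mulr_ge0 ?exprn_ge0 // exp_coeff_ge0 //.
  by rewrite mulr_ge0 ?sqr_ge0 ?beta_sum_ge0.
- exact: norm_gamma_term_le.
- exact/is_cvg_seriesZ/is_cvg_series_exp_coeff.
Qed.

Definition hcoef (k n : nat) : R :=
  if ((n <= k) && ((k - n) %% 2 == 0))%N then g ((k - n) %/ 2) n else 0.

Lemma hcoef0 n : hcoef 0 n = (n == 0)%:R.
Proof. by case: n. Qed.

Lemma hcoefS k n :
  hcoef k.+1 n = (if n is n'.+1 then hcoef k n' else 0) + b n * hcoef k n.+1.
Proof.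
rewrite /hcoef; case: n => [|n].
  rewrite add0r; case: ifP => ?; case: ifP => ?; try (exfalso; lia).
    have [l [E1 E2]] : exists l, ((k.+1 - 0) %/ 2 = l.+1 /\ (k - 1) %/ 2 = l)%N.
      by exists ((k - 1) %/ 2)%N; lia.
    by rewrite E1 E2 /= big_nat1.
  by rewrite mulr0.
rewrite subSS ltnS.
case: ifP => ?; case: ifP => ?; try (exfalso; lia).
- have [l [E2 E3]] : exists l, ((k - n) %/ 2 = l.+1 /\ (k - n.+2) %/ 2 = l)%N.
    by exists ((k - n.+2) %/ 2)%N; lia.
  by rewrite E2 E3 /= big_nat_recr.
- have E2 : ((k - n) %/ 2 = 0)%N by lia.
  by rewrite E2 /= mulr0 addr0.
- by rewrite mulr0 addr0.
Qed.

(* The terms [k = n + 2 l] with [k < m] are exactly those with [l < gamma_nterms n m]. *)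
Definition gamma_nterms (n m : nat) : nat := ((m - n + 1) %/ 2)%N.

Lemma sum_exp_hcoef n m :
  \sum_(k < m) ((- 'i * tau%:C) ^+ k / k`!%:R) * (hcoef k n)%:C =
  (- 'i) ^+ n * (series (gamma_term N beta n tau) (gamma_nterms n m))%:C.
Proof.
elim: m => [|m IH]; first by rewrite big_ord0 /gamma_nterms /series /= big_geq ?mulr0.
rewrite big_ord_recr /= IH /hcoef.
case: ifP => [km|nkm]; last first.
  by rewrite mulr0 addr0 /gamma_nterms; congr (_ * (series _ _)%:C); lia.
have [l [Em El]] : exists l, (m = n + 2 * l /\ gamma_nterms n m = l)%N.
  by exists ((m - n) %/ 2)%N; rewrite /gamma_nterms; lia.
have -> : gamma_nterms n m.+1 = l.+1 by rewrite /gamma_nterms; lia.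
rewrite El /series /= big_nat_recr //= rmorphD mulrDr; congr (_ + _).
rewrite /gamma_term Em addKn mulKn // exprMn exprD exprM sqrrN sqr_i.
by rewrite !rmorphM fmorphV rmorph_nat !rmorphXn rmorphN1 !mulrA.
Qed.

End Coefficients.

Section Ladder.
Variable R : realType.
Local Notation C := (R[i]).
Variables (N : nat) (beta : nat -> R).
Hypothesis beta_gt0 : forall s : nat, (s < N)%N -> 0 < beta s.

Local Notation b := (betaN N beta).
Local Notation A := (ladderA N beta).
Local Notation Ad := (adj (ladderA N beta)).

Definition sqrt_beta (s : nat) : C := (Num.sqrt (b s))%:C.

Lemma sqrt_betaN : sqrt_beta N = 0.
Proof. by rewrite /sqrt_beta betaN_out // sqrtr0. Qed.

Lemma sqrt_beta_sqr s : sqrt_beta s * sqrt_beta s = (b s)%:C.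
Proof. by rewrite /sqrt_beta -rmorphM -expr2 sqr_sqrtr // (betaN_ge0 beta_gt0). Qed.

(* Coordinate vectors indexed by [nat]; [evec n = 0] for [n > N]. *)
Definition evec (n : nat) : 'cV[C]_N.+1 := \col_i ((i == n :> nat)%:R).

Lemma Psi_evec (k : 'I_N.+1) : Psi R k = evec k.
Proof. by apply/matrixP => i j; rewrite !mxE (ord1 j) andbT. Qed.

Lemma mulmx_evec (M : 'M[C]_N.+1) (f : 'I_N.+1 -> nat -> C) n :
  (forall i j, M i j = f i j) ->
  M *m evec n = \col_i (if (n < N.+1)%N then f i n else 0).
Proof.
move=> Mf; apply/matrixP => i j; rewrite !mxE.
under eq_bigr do rewrite !mxE Mf mulr_natr mulrb.
by rewrite -big_mkcond big_ord1_eq.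
Qed.

Lemma ladderA_evec n : A *m evec n = if n is n'.+1 then sqrt_beta n' *: evec n' else 0.
Proof.
rewrite (@mulmx_evec _ (fun i j => if j == i.+1 then sqrt_beta i else 0)); last first.
  by move=> i j; rewrite mxE.
apply/matrixP => i j; case: n => [|n]; rewrite !mxE //= eqSS.
have [<-|] := eqVneq (i : nat) n; last by rewrite mulr0; case: ifP.
rewrite mulr1; case: ifP => // /negbT; rewrite -leqNgt => iN.
have -> : (i : nat) = N by move: (ltn_ord i) iN; lia.
by rewrite sqrt_betaN.
Qed.

Lemma adj_ladderA_evec n : Ad *m evec n = sqrt_beta n *: evec n.+1.
Proof.
rewrite (@mulmx_evec _ (fun i j => if (i : nat) == j.+1 then sqrt_beta j else 0)).
  apply/matrixP => i j; rewrite !mxE; case: ifP => nN.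
    by case: ifP; rewrite ?mulr1 ?mulr0.
  have [iE|] := eqVneq (i : nat) n.+1; last by rewrite mulr0.
  by move: (ltn_ord i) (negbT nN); rewrite iE; lia.
by move=> i j; rewrite !mxE; case: ifP; rewrite ?conjc_real ?conjc0.
Qed.

Definition raised (n : nat) : 'cV[C]_N.+1 := Ad ^+ n *m evec 0.

Lemma raisedS n : raised n.+1 = Ad *m raised n.
Proof. by rewrite /raised exprS -mulmxE mulmxA. Qed.

Lemma raised_evec n : raised n = (\prod_(s < n) sqrt_beta s) *: evec n.
Proof.
elim: n => [|n IH]; first by rewrite /raised expr0 mul1mx big_ord0 scale1r.
by rewrite raisedS IH -scalemxAr adj_ladderA_evec scalerA big_ord_recr.
Qed.

Lemma raised_out : raised N.+1 = 0.
Proof. by rewrite raised_evec big_ord_recr /= sqrt_betaN mulr0 scale0r. Qed.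

Lemma ladderA_raised n :
  A *m raised n = if n is n'.+1 then (b n')%:C *: raised n' else 0.
Proof.
rewrite raised_evec -scalemxAr ladderA_evec; case: n => [|n]; first by rewrite scaler0.
by rewrite raised_evec !scalerA big_ord_recr /= -mulrA sqrt_beta_sqr mulrC.
Qed.

Definition raised_comb (f : nat -> C) : 'cV[C]_N.+1 :=
  \sum_(0 <= n < N.+1) f n *: raised n.

Lemma ham_raised_comb f : (A + Ad) *m raised_comb f =
  raised_comb (fun n => (if n is n'.+1 then f n' else 0) + (b n)%:C * f n.+1).
Proof.
have -> : raised_comb (fun n => (if n is n'.+1 then f n' else 0) + (b n)%:C * f n.+1) =
    raised_comb (fun n => if n is n'.+1 then f n' else 0) +
    raised_comb (fun n => (b n)%:C * f n.+1).
  by rewrite -big_split; apply: eq_bigr => n _; rewrite scalerDl.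
rewrite /raised_comb mulmx_sumr.
under eq_bigr do rewrite -scalemxAr mulmxDl ladderA_raised -raisedS scalerDr.
rewrite big_split /= addrC; congr (_ + _).
  rewrite big_nat_recr //= raised_out scaler0 addr0.
  by rewrite [RHS]big_nat_recl //= scale0r add0r.
rewrite big_nat_recl //= scaler0 add0r.
rewrite [RHS]big_nat_recr //= betaN_out // mul0r scale0r addr0.
by apply: eq_bigr => i _; rewrite scalerA mulrC.
Qed.

Lemma ham_pow_evec0 k :
  (A + Ad) ^+ k *m evec 0 = raised_comb (fun n => (hcoef N beta k n)%:C).
Proof.
elim: k => [|k IH].
  rewrite expr0 mul1mx /raised_comb big_nat_recl // big1 => [|n _].
    by rewrite hcoef0 scale1r addr0 /raised expr0 mul1mx.
  by rewrite hcoef0 scale0r.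
rewrite exprS -mulmxE -mulmxA IH ham_raised_comb.
by apply: eq_bigr => n _; rewrite hcoefS rmorphD rmorphM; case: n.
Qed.

Variable tau : R.

Lemma expv_partial_evec0 m : expv_partial (A + Ad) tau (evec 0) m =
  \sum_(n < N.+1) (series (gamma_term N beta n tau) (gamma_nterms n m))%:C *:
     ((- 'i *: Ad) ^+ n *m evec 0).
Proof.
rewrite /expv_partial.
under eq_bigr do rewrite ham_pow_evec0 /raised_comb scaler_sumr.
rewrite exchange_big /= big_mkord; apply: eq_bigr => n _.
under eq_bigr do rewrite scalerA.
by rewrite -scaler_suml sum_exp_hcoef exprZn -scalemxAl scalerA mulrC.
Qed.

End Ladder.

Lemma cvg_gamma_nterms n : gamma_nterms n m @[m --> \oo] --> \oo.
Proof.
by apply: cvg_comp (cvg_comp _ _ (cvg_subnr n) (cvg_addnr 1)) (@cvg_divnr 2 isT).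
Qed.

Lemma cvg_real_complex (R : realType) (T : Type) (F : set_system T) (u : T -> R) (l : R) :
  Filter F -> u x @[x --> F] --> l ->
  ((u x)%:C : (R[i])^o) @[x --> F] --> (l%:C : (R[i])^o).
Proof.
move=> FF /cvgrPdist_lt ul; apply/cvgrPdist_lt => -[e e'].
rewrite ltcE /= => /andP[/eqP -> e0]; apply: filterS (ul _ e0) => x.
by rewrite complexr0 -rmorphB normc_def /= expr0n /= addr0 sqrtr_sqr ltcR.
Qed.

Theorem corollary1 (R : realType) (N : nat) (beta : nat -> R)
  (hbeta : forall s : nat, (s < N)%N -> 0 < beta s) (tau : R) :
  let A := ladderA N beta in
  let H := A + adj A in
  let Psi0 := @Psi R N ord0 in
  (forall n : nat, (n <= N)%N -> cvgn (series (gamma_term N beta n tau))) /\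
  ((expv_partial H tau Psi0 : nat -> 'cV[(R[i])^o]_N.+1) @ \oo -->
     (\sum_(n < N.+1) (gamma N beta n tau)%:C *: ((- 'i *: adj A) ^+ n *m Psi0)
        : 'cV[(R[i])^o]_N.+1)).
Proof.
move=> A H Psi0; split=> [n _|]; first exact: gamma_term_cvg.
rewrite /Psi0 Psi_evec.
have -> : expv_partial H tau (evec R N 0) = fun m =>
    \sum_(n < N.+1) (series (gamma_term N beta n tau) (gamma_nterms n m))%:C *:
      ((- 'i *: adj A) ^+ n *m evec R N 0).
  by apply: funext => m; rewrite expv_partial_evec0.
apply: cvg_big => [|n _]; first exact: add_continuous.
apply: cvgZ; last exact: cvg_cst.
apply: cvg_real_complex.
by apply: cvg_comp (cvg_gamma_nterms n) _; exact: gamma_term_cvg.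
Qed.
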